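(* Let $X$ be a compact metric space, $f_1,f_2:X\to X$ continuous and $F=\{f_1,f_2\}$. If $F$ has the (Hausdorff metric) average shadowing property, then $F^k$ has the average shadowing property for every integer $k>1$.
   Context: Throughout, $(X,d)$ is a compact metric space, $\mathbb{N}=\{0,1,2,\dots\}$, $\mathbb{Z}^+=\{1,2,\dots\}$. $\mathbb{K}(X)$ is the set of nonempty compact subsets of $X$ with the Hausdorff metric $d_H(A,B)=\max\{\sup_{a\in A}\inf_{b\in B}d(a,b),\sup_{b\in B}\inf_{a\in A}d(a,b)\}$; a point $x$ is identified with $\{x\}$. Multiple mappings: $F=\{f_1,f_2\}$ maps $x$ to $F(x)=\{f_1(x),f_2(x)\}$; for $n\ge1$, $F^n(x)=\{f_{i_1}\cdots f_{i_n}(x): i_1,\dots,i_n\in\{1,2\}\}$, $F^0(x)=\{x\}$; for $A\in\mathbb{K}(X)$, $F^n(A)=\bigcup_{a\in A}F^n(a)$. For $k\ge1$, $F^k$ is regarded as the multiple mappings consisting of the $2^k$ maps $f_{i_1}\cdots f_{i_k}$, so $(F^k)^n=F^{kn}$. Average shadowing: for $G=F$ or $G=F^k$, a sequence $\{A_n\}_{n\ge0}\subset\mathbb{K}(X)$ with $A_0$ a singleton is a $\delta$-average-pseudo-orbit of $G$ if there is $N(\delta)>0$ such that for all $n\ge N(\delta)$ and all $m\in\mathbb{Z}^+$, $\frac1n\sum_{i=0}^{n-1}d_H(G(A_{i+m}),A_{i+m+1})<\delta$. $G$ has the average shadowing property if for every $\epsilon>0$ there is $\delta>0$ such that for every $\delta$-average-pseudo-orbit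 $\{A_n\}$ of $G$ there is $y\in X$ with $\limsup_{n\to\infty}\frac1n\sum_{i=0}^{n-1}d_H(G^i(y),A_i)<\epsilon$. *)

From Stdlib Require List.
From mathcomp Require Import all_boot all_order all_algebra.
From mathcomp Require Import all_classical all_reals all_analysis.
Set Implicit Arguments. Unset Strict Implicit. Unset Printing Implicit Defensive.
Import Order.TTheory GRing.Theory Num.Theory.
Local Open Scope classical_set_scope.
Local Open Scope ring_scope.

Section MetricDefs.
Variables (R : realType) (X : Type) (d : X -> X -> R).

Definition is_metric : Prop :=
  (forall x y, d x y = 0 <-> x = y) /\
  (forall x y, d x y = d y x) /\
  (forall x y z, d x z <= d x y + d y z).

Definition d_converges (u : nat -> X) (l : X) : Prop :=
  forall eps : R, 0 < eps -> exists N : nat, forall n, (N <= n)%N -> d (u n) l < eps.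

Definition d_compact (S : set X) : Prop :=
  forall u : nat -> X, (forall n, S (u n)) ->
    exists (phi : nat -> nat) (l : X),
      (forall n, (phi n < phi n.+1)%N) /\ S l /\ d_converges (u \o phi) l.

Definition d_continuous (f : X -> X) : Prop :=
  forall x (eps : R), 0 < eps -> exists2 delta : R, 0 < delta &
    forall y, d x y < delta -> d (f x) (f y) < eps.

Definition in_KX (A : set X) : Prop := A !=set0 /\ d_compact A.

Definition hausdorff (A B : set X) : R :=
  Num.max (sup [set inf [set d a b | b in B] | a in A])
          (sup [set inf [set d a b | a in A] | b in B]).

Definition mm_img (G : seq (X -> X)) (A : set X) : set X :=
  [set y | exists2 g, Stdlib.Lists.List.In g G & exists2 a, A a & y = g a].

Fixpoint mm_iter (G : seq (X -> X)) (n : nat) : seq (X -> X) :=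
  match n with
  | 0 => [:: id]
  | n'.+1 => [seq g \o h | g <- G, h <- mm_iter G n']
  end.

Definition avg_pseudo_orbit (G : seq (X -> X)) (delta : R) (A : nat -> set X) : Prop :=
  (forall n, in_KX (A n)) /\ (exists x, A 0%N = [set x]) /\
  exists N : nat, (0 < N)%N /\
    forall n m : nat, (N <= n)%N -> (0 < m)%N ->
      n%:R^-1 * \sum_(i < n) hausdorff (mm_img G (A (i + m)%N)) (A (i + m).+1)
        < delta.

Definition avg_shadowing (G : seq (X -> X)) : Prop :=
  forall eps : R, 0 < eps -> exists2 delta : R, 0 < delta &
    forall A : nat -> set X, avg_pseudo_orbit G delta A ->
      exists y : X,
        (limn_esup (fun n : nat =>
           (n%:R^-1 * \sum_(i < n) hausdorff (mm_img (mm_iter G i) [set y]) (A i))%:E)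
         < eps%:E)%E.

End MetricDefs.

From mathcomp Require Import all_boot all_order all_algebra zify.
From mathcomp Require Import all_classical all_reals all_analysis lra.
Import Order.TTheory GRing.Theory Num.Theory.
Local Open Scope classical_set_scope.
Local Open Scope ring_scope.
Set Implicit Arguments. Unset Strict Implicit.

(* Given a (delta/2)-average-pseudo-orbit (A_i) of F^k, fill each gap with
   F-images: B_j = F^(j mod k)(A_(j div k)).  Within a block B_(j+1) = F(B_j)
   exactly, so the only jumps of B are the jumps d_H(F^k(A_i), A_(i+1)) of A,
   sitting at the positions j = k-1 (mod k); a window of length n of B thus
   covers at most n consecutive jumps of A, and its average is at most the
   average for A plus O(1/n).  Hence B is a delta-average-pseudo-orbit of F.
   A point y which (eps/k)-shadows B on average eps-shadows A under F^k:
   B_(k i) = A_i and (F^k)^i(y) = F^(k i)(y), and keeping only the indices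
   that are multiples of k loses at most a factor k in the averages. *)

Lemma In_allpairs (T : Type) (G H : seq (T -> T)) (f : T -> T) :
  List.In f [seq g \o h | g <- G, h <- H] <->
  exists g h, [/\ List.In g G, List.In h H & f = g \o h].
Proof.
elim: G => [|a G IH] /=; first by split => // -[g [h []]].
rewrite List.in_app_iff IH List.in_map_iff; split.
- case=> [[h [<- hH]]|[g [h [gG hH ->]]]]; first by exists a, h; split; [left|..].
  by exists g, h; split; [right|..].
- case=> g [h [[<-|gG] hH ->]]; first by left; exists h.
  by right; exists g, h.
Qed.

Lemma mm_img_cons (T : Type) (g : T -> T) (G : seq (T -> T)) (S : set T) :
  mm_img (g :: G) S = g @` S `|` mm_img G S.
Proof.
apply/seteqP; split => x /=.
- by case=> h [<-|hG] aS; [left; case: aS => a Sa ->; exists a|right; exists h].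
- case=> [[a Sa <-]|[h hG aS]]; first by exists g; [left|exists a].
  by exists h; [right|].
Qed.

Lemma mm_img_iter (T : Type) (G : seq (T -> T)) n (S : set T) :
  mm_img (mm_iter G n) S = iter n (mm_img G) S.
Proof.
elim: n S => [|n IH] S /=; apply/seteqP; split => x /=.
- by case=> g [<-|[]] [a Sa ->].
- by move=> Sx; exists id; [left|exists x].
- case=> f /In_allpairs [g [h [gG hH ->]]] [a Sa ->].
  by exists g => //; exists (h a) => //; rewrite -IH; exists h => //; exists a.
- case=> g gG [b]; rewrite -IH => -[h hH [a Sa ->]] ->.
  by exists (g \o h); [apply/In_allpairs; exists g, h|exists a].
Qed.

Lemma mm_img_iter_mul (T : Type) (G : seq (T -> T)) k i (S : set T) :
  mm_img (mm_iter (mm_iter G k) i) S = mm_img (mm_iter G (k * i)) S.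
Proof.
have iterk : mm_img (mm_iter G k) = iter k (mm_img G).
  by apply/funext => U; exact: mm_img_iter.
by rewrite !mm_img_iter iterk mulnC iterM.
Qed.

Section SupInf.
Variables (R : realType) (E : set R) (D : R).
Hypotheses (D0 : 0 <= D) (ED : forall x, E x -> 0 <= x <= D).

Lemma sup_ge0_le : 0 <= sup E <= D.
Proof.
have [->|/set0P [x Ex]] := eqVneq E set0; first by rewrite sup0 lexx.
have /andP[x0 _] := ED Ex.
apply/andP; split; last by apply: ge_sup; [exists x|move=> y /ED /andP[]].
by apply: le_trans x0 (ub_le_sup _ Ex); exists D => y /ED /andP[].
Qed.

Lemma inf_ge0_le : 0 <= inf E <= D.
Proof.
have [->|/set0P [x Ex]] := eqVneq E set0; first by rewrite inf0 lexx.
have /andP[_ xD] := ED Ex.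
apply/andP; split; first by apply: lb_le_inf; [exists x|move=> y /ED /andP[]].
by apply: le_trans xD; apply: ge_inf => //; exists 0 => y /ED /andP[].
Qed.

End SupInf.

Section MetricSpace.
Variables (R : realType) (X : Type) (d : X -> X -> R).
Hypothesis hd : is_metric d.

Lemma d_ge0 x y : 0 <= d x y.
Proof.
case: hd => h0 [hs ht]; have := ht x y x.
rewrite (proj2 (h0 x x) erefl) (hs y x); lra.
Qed.

Lemma d_compact_bounded (x0 : X) :
  d_compact d setT -> exists D, 0 <= D /\ forall x y, d x y <= D.
Proof.
case: hd => _ [hs ht] hX.
suff [M hM] : exists M, forall y, d x0 y <= M.
  exists (M + M); split; first by rewrite addr_ge0 // (le_trans (d_ge0 x0 x0)).
  by move=> x y; apply: le_trans (ht x x0 y) _; rewrite hs lerD.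
apply: contrapT => /forallNP unbounded.
have /choice [u hu] : forall n : nat, exists y, n%:R < d x0 y.
  by move=> n; have /existsNP [y /negP] := unbounded n%:R; rewrite -ltNge; exists y.
have [phi [l [phi_incr [_ ul]]]] := hX u (fun _ => I).
have [N hN] := ul 1 ltr01.
pose C := d x0 l + 1.
have C0 : 0 <= C by rewrite addr_ge0 ?d_ge0.
pose n := maxn N (Num.bound C).
have phi_ge m : (m <= phi m)%N.
  by elim: m => // m IH; exact: leq_ltn_trans IH (phi_incr m).
have : d x0 (u (phi n)) < C.
  by apply: le_lt_trans (ht x0 l _) _; rewrite ltrD2l hs hN ?leq_maxl.
apply/negP; rewrite -leNgt; apply: le_trans (ltW (hu _)).
apply: le_trans (ltW (archi_boundP C0)) _.
by rewrite ler_nat (leq_trans (leq_maxr N _) (phi_ge n)).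
Qed.

Lemma hausdorff_ge0_le (D : R) (A B : set X) :
  0 <= D -> (forall x y, d x y <= D) -> 0 <= hausdorff d A B <= D.
Proof.
move=> D0 dD.
have side (U V : set X) (e : X -> X -> R) : (forall x y, 0 <= e x y <= D) ->
    0 <= sup [set inf [set e a b | b in V] | a in U] <= D.
  move=> eD; apply: sup_ge0_le => // _ [a _ <-].
  by apply: inf_ge0_le => // _ [b _ <-].
have /andP[a0 aD] := side A B d (fun x y => introT andP (conj (d_ge0 x y) (dD x y))).
have /andP[b0 bD] := side B A (fun b a => d a b)
  (fun x y => introT andP (conj (d_ge0 y x) (dD y x))).
by rewrite /hausdorff le_max a0 ge_max aD bD.
Qed.

Lemma hausdorff_xx (A : set X) : hausdorff d A A = 0.
Proof.
have side (e : X -> X -> R) : (forall x y, 0 <= e x y) -> (forall x, e x x = 0) ->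
    sup [set inf [set e a b | b in A] | a in A] = 0.
  move=> e0 exx; apply/eqP; rewrite eq_le andbC.
  apply: sup_ge0_le => // _ [a Aa <-].
  apply/andP; split; first by apply: lb_le_inf; [exists (e a a), a|move=> _ [b _ <-]].
  by rewrite -(exx a); apply: ge_inf; [exists 0 => _ [b _ <-]|exists a].
case: hd => h0 _.
by rewrite /hausdorff side ?(side (fun b a => d a b)) ?maxxx // => *;
  rewrite ?d_ge0 // (proj2 (h0 _ _)).
Qed.

Lemma d_compact_image (S : set X) (f : X -> X) :
  d_compact d S -> d_continuous d f -> d_compact d (f @` S).
Proof.
case: hd => _ [hs _] hS hf u hu.
have /choice [v hv] : forall n, exists a, S a /\ f a = u n.
  by move=> n; case: (hu n) => a ? ?; exists a.
have [phi [l [phi_incr [Sl vl]]]] := hS v (fun n => proj1 (hv n)).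
exists phi, (f l); split => //; split; first by exists l.
move=> e e0; have [r r0 hr] := hf l e e0.
have [N hN] := vl r r0; exists N => n Nn /=.
by rewrite -(proj2 (hv (phi n))) hs hr // hs hN.
Qed.

Lemma d_compact_setU (S1 S2 : set X) :
  d_compact d S1 -> d_compact d S2 -> d_compact d (S1 `|` S2).
Proof.
move=> h1 h2 u hu.
have [inf1|] := pselect (forall N, exists n, (N <= n)%N /\ S1 (u n)).
  have [c hc] := choice inf1.
  pose sig := fix sig n := if n is n'.+1 then c (sig n').+1 else c 0%N.
  have sig_incr n : (sig n < sig n.+1)%N by exact: (proj1 (hc _)).
  have S1sig n : S1 (u (sig n)) by case: n => [|n]; exact: (proj2 (hc _)).
  have [phi [l [phi_incr [Sl hl]]]] := h1 (u \o sig) S1sig.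
  exists (sig \o phi), l; split; last by split; [left|].
  move=> n /=; move: (phi n) (phi n.+1) (phi_incr n) => a b; elim: b => // b IH.
  by rewrite ltnS leq_eqVlt => /orP[/eqP->//|/IH ab]; exact: ltn_trans ab (sig_incr b).
move=> /existsNP [N] /forallNP fin1.
have S2u n : S2 (u (n + N)%N).
  case: (hu (n + N)%N) => // S1u; exfalso; apply: (fin1 (n + N)%N).
  by split; rewrite ?leq_addl.
have [phi [l [phi_incr [Sl hl]]]] := h2 (fun n => u (n + N)%N) S2u.
exists (fun n => phi n + N)%N, l; split; last by split; [right|].
by move=> n; rewrite ltn_add2r.
Qed.

Lemma d_compact_mm_img (G : seq (X -> X)) (S : set X) :
  (forall g, List.In g G -> d_continuous d g) ->
  d_compact d S -> d_compact d (mm_img G S).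
Proof.
move=> Gc cS; elim: G Gc => [|g G IH] Gc.
  by move=> u /(_ 0%N) [].
rewrite mm_img_cons; apply: d_compact_setU; last by apply: IH => h hG; apply: Gc; right.
by apply: d_compact_image => //; apply: Gc; left.
Qed.

Lemma in_KX_iter_mm_img (G : seq (X -> X)) n (S : set X) :
  G <> [::] -> (forall g, List.In g G -> d_continuous d g) ->
  in_KX d S -> in_KX d (iter n (mm_img G) S).
Proof.
case: G => // g G _ Gc; elim: n => // n IH /IH [[x Sx] cS] /=; split.
  by exists (g x); exists g; [left|exists x].
exact: d_compact_mm_img.
Qed.

End MetricSpace.

Section NatDivision.
Local Open Scope nat_scope.

Lemma succ_divn_modn j k : (0 < k)%N ->
  if j %% k == k.-1 then j.+1 %% k = 0 /\ j.+1 %/ k = (j %/ k).+1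
  else j.+1 %% k = (j %% k).+1 /\ j.+1 %/ k = j %/ k.
Proof.
move=> k0; have jk := ltn_pmod j k0.
have ej : j.+1 = j %/ k * k + (j %% k).+1 by rewrite {1}(divn_eq j k) addnS.
case: eqP => jk1.
  have -> : j.+1 = (j %/ k).+1 * k + 0 by rewrite ej jk1 prednK // addn0 mulSn addnC.
  by rewrite modnMDl divnMDl // mod0n div0n addn0.
have jk' : ((j %% k).+1 < k)%N by move: jk jk1; lia.
by rewrite ej modnMDl divnMDl // modn_small // (divn_small jk') addn0.
Qed.

Lemma leq_divnD m n k : (0 < k)%N -> ((m + n) %/ k <= m %/ k + n)%N.
Proof.
move=> k0; rewrite {1}(divn_eq m k) -addnA divnMDl // leq_add2l -ltnS ltn_divLR //.
by have := ltn_pmod m k0; nia.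
Qed.

End NatDivision.

Section WindowSums.
Variables (R : realType) (e : nat -> R) (D delta : R) (N : nat).
Hypotheses (eD : forall p, 0 <= e p <= D) (D0 : 0 <= D) (delta0 : 0 <= delta).
Hypothesis (N0 : (0 < N)%N).
Hypothesis e_mean : forall n m, (N <= n)%N -> (0 < m)%N ->
  n%:R^-1 * \sum_(i < n) e (i + m)%N < delta.

Lemma sum_window_le m q : (0 < m)%N ->
  \sum_(i < q) e (i + m)%N <= N%:R * D + q%:R * delta.
Proof.
move=> m0; have [Nq|qN] := leqP N q.
  have q0 : 0 < q%:R :> R by rewrite ltr0n (leq_trans N0).
  have := e_mean Nq m0; rewrite -ltr_pdivlMl ?invr_gt0 // invrK mulrC => /ltW.
  by move/le_trans; apply; rewrite lerDr mulr_ge0.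
apply: le_trans (_ : \sum_(i < q) D <= _).
  by apply: ler_sum => i _; case/andP: (eD (i + m)%N).
rewrite sumr_const card_ord -[D *+ q]mulr_natl; apply: le_trans (_ : N%:R * D <= _).
  by apply: ler_wpM2r => //; rewrite ler_nat ltnW.
by rewrite lerDl mulr_ge0.
Qed.

(* The extra [D] pays for the term [e 0]: the hypothesis only controls
   windows starting at [m > 0]. *)
Lemma sum_block_le a b n : (a <= b <= a + n)%N ->
  \sum_(a <= p < b) e p <= D + N%:R * D + n%:R * delta.
Proof.
case/andP=> ab ban.
have window m q : (0 < m)%N -> (q <= n)%N ->
    \sum_(i < q) e (i + m)%N <= N%:R * D + n%:R * delta.
  move=> m0 qn; apply: le_trans (sum_window_le q m0) _.
  by rewrite lerD2l; apply: ler_wpM2r => //; rewrite ler_nat.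
have [a0|a0] := posnP a; last first.
  rewrite -(add0n a) big_addn big_mkord; apply: le_trans (window _ _ a0 _) _.
    by move: ban; lia.
  by rewrite -addrA lerDr.
subst a; have [->|b0] := posnP b; first by rewrite big_geq // !addr_ge0 ?mulr_ge0.
rewrite big_ltn // -addrA; apply: lerD; first by case/andP: (eD 0%N).
rewrite -(add0n 1%N) big_addn big_mkord; apply: window => //.
by move: ban; lia.
Qed.

End WindowSums.

Section MeanLimsup.
Variable R : realType.

Lemma limn_esup_lt_bound (u : (\bar R)^nat) (c : R) : (limn_esup u < c%:E)%E ->
  exists r (s : R), s < c /\ forall n, (r <= n)%N -> (u n <= s%:E)%E.
Proof.
rewrite /limn_esup /limf_esup => /ereal_inf_lt [_ [V [r _ rV] <-]].
set s := ereal_sup _ => sc.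
have us n : (r <= n)%N -> (u n <= s)%E.
  by move=> rn; apply: ereal_sup_ubound; exists n => //; apply: rV.
exists r; case: s sc us => [s| |] sc us //.
  by exists s; split; [rewrite -lte_fin|].
exists (c - 1); split; first by rewrite gtrDl oppr_lt0 ltr01.
by move=> n /us; rewrite leeNy_eq => /eqP ->; exact: leNye.
Qed.

Lemma limn_esup_le_bound (u : (\bar R)^nat) r (s : \bar R) :
  (forall n, (r <= n)%N -> (u n <= s)%E) -> (limn_esup u <= s)%E.
Proof.
move=> us; apply: (@le_trans _ _ (ereal_sup (u @` [set n | (r <= n)%N]))).
  by apply: ereal_inf_lbound; exists [set n | (r <= n)%N] => //; exists r.
by apply: ge_ereal_sup => _ [n rn <-]; apply: us.
Qed.

Variables (a : nat -> R) (k : nat).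
Hypotheses (a0 : forall i, 0 <= a i) (k0 : (0 < k)%N).

Lemma sum_mul_le n : \sum_(i < n) a (k * i)%N <= \sum_(j < k * n) a j.
Proof.
elim: n => [|n IH]; first by rewrite muln0 !big_ord0.
rewrite big_ord_recr mulnS addnC big_split_ord /=; apply: lerD => //.
by rewrite (bigD1 (Ordinal k0)) //= addn0 lerDl sumr_ge0.
Qed.

Lemma mean_mul_le n : n%:R^-1 * \sum_(i < n) a (k * i)%N <=
  k%:R * ((k * n)%N%:R^-1 * \sum_(j < k * n) a j).
Proof.
rewrite natrM invfM !mulrA divff ?mul1r ?pnatr_eq0 -?lt0n //.
by rewrite ler_wpM2l ?invr_ge0 ?sum_mul_le.
Qed.

Lemma limn_esup_mean_mul_lt (c : R) :
  (limn_esup (fun n => (n%:R^-1 * \sum_(i < n) a i)%:E) < c%:E)%E ->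
  (limn_esup (fun n => (n%:R^-1 * \sum_(i < n) a (k * i)%N)%:E) < (k%:R * c)%:E)%E.
Proof.
move=> /limn_esup_lt_bound [r [s [sc us]]].
apply: (@le_lt_trans _ _ (k%:R * s)%:E); last by rewrite lte_fin ltr_pM2l ?ltr0n.
apply: (@limn_esup_le_bound _ r) => n rn; rewrite lee_fin.
apply: le_trans (mean_mul_le n) _; rewrite ler_wpM2l // -lee_fin us //.
by rewrite (leq_trans rn) // leq_pmull.
Qed.

End MeanLimsup.

Definition interpolate (X : Type) (G : seq (X -> X)) (k : nat) (A : nat -> set X)
    (j : nat) : set X :=
  iter (j %% k)%N (mm_img G) (A (j %/ k)%N).

Section Interpolation.
Variables (R : realType) (X : Type) (d : X -> X -> R).
Hypothesis hd : is_metric d.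
Variables (G : seq (X -> X)) (k : nat) (A : nat -> set X).
Hypothesis k0 : (0 < k)%N.

Local Notation B := (interpolate G k A).
Local Notation jump F S j := (hausdorff d (mm_img F (S j)) (S j.+1)).

Lemma interpolate_mul i : B (k * i)%N = A i.
Proof. by rewrite /interpolate mulnC modnMl mulnK. Qed.

Lemma jump_interpolate j : jump G B j =
  if (j %% k == k.-1)%N then jump (mm_iter G k) A (j %/ k)%N else 0.
Proof.
rewrite /interpolate; have := succ_divn_modn j k0.
case: eqP => jk [-> ->]; last exact: hausdorff_xx.
by rewrite mm_img_iter -iterS jk prednK.
Qed.

Lemma sum_jump_interpolate M : \sum_(0 <= j < M) jump G B j =
  \sum_(0 <= p < M %/ k) jump (mm_iter G k) A p.
Proof.
elim: M => [|M IH]; first by rewrite div0n !big_geq.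
rewrite big_nat_recr //= IH jump_interpolate; have := succ_divn_modn M k0.
by case: eqP => _ [_ ->]; rewrite ?big_nat_recr ?addr0.
Qed.

Lemma sum_window_interpolate m n : \sum_(i < n) jump G B (i + m)%N =
  \sum_(m %/ k <= p < (m + n) %/ k) jump (mm_iter G k) A p.
Proof.
have := @big_cat_nat R 0 +%R m 0 (m + n) xpredT (fun j => jump G B j)
  (leq0n m) (leq_addr n m).
rewrite !sum_jump_interpolate (@big_cat_nat R 0 +%R (m %/ k) 0 ((m + n) %/ k));
  rewrite ?leq_div2r ?leq_addr // => /addrI ->.
by rewrite -[X in \big[_/_]_(X <= _ < _) _]add0n big_addn addKn big_mkord.
Qed.

Hypotheses (hX : d_compact d setT) (G_neq0 : G <> [::]).
Hypothesis G_cont : forall g, List.In g G -> d_continuous d g.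

Lemma avg_pseudo_orbit_interpolate delta : 0 < delta ->
  avg_pseudo_orbit d (mm_iter G k) (delta / 2) A -> avg_pseudo_orbit d G delta B.
Proof.
move=> delta0 [AK [[x0 A0] [N [N0 A_mean]]]].
have [D [D0 dD]] := d_compact_bounded hd x0 hX.
have eD p : 0 <= jump (mm_iter G k) A p <= D by exact: hausdorff_ge0_le.
split; first by move=> j; apply: in_KX_iter_mm_img.
split; first by exists x0; rewrite /interpolate mod0n div0n.
(* Windows longer than [C] make the boundary cost [D + N D] at most [n delta / 2]. *)
pose C := 2 * (D + N%:R * D) / delta.
have C0 : 0 <= C by rewrite /C divr_ge0 ?(ltW delta0) // mulr_ge0 // addr_ge0 // mulr_ge0.
exists (Num.bound C).+1; split => // n m nN m0.
have n0 : 0 < n%:R :> R by rewrite ltr0n (leq_trans _ nN).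
have nC : 2 * (D + N%:R * D) < n%:R * delta.
  rewrite -ltr_pdivrMr //; apply: lt_le_trans (archi_boundP C0) _.
  by rewrite ler_nat ltnW.
have sumA : \sum_(m %/ k <= p < (m + n) %/ k) jump (mm_iter G k) A p <=
    D + N%:R * D + n%:R * (delta / 2).
  apply: (sum_block_le eD D0 _ N0 A_mean); first by rewrite divr_ge0 ?ltW.
  by rewrite leq_div2r ?leq_addr ?leq_divnD.
rewrite sum_window_interpolate mulrC ltr_pdivrMr //.
lra.
Qed.

End Interpolation.

Theorem avg_shadowing_mm_iter (R : realType) (X : Type) (d : X -> X -> R)
    (G : seq (X -> X)) (k : nat) :
  is_metric d -> d_compact d setT -> G <> [::] ->
  (forall g, List.In g G -> d_continuous d g) -> (0 < k)%N ->
  avg_shadowing d G -> avg_shadowing d (mm_iter G k).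
Proof.
move=> hd hX G_neq0 G_cont k0 shG eps eps0.
have kR : 0 < k%:R :> R by rewrite ltr0n.
have [delta delta0 shB] := shG (eps / k%:R) (divr_gt0 eps0 kR).
exists (delta / 2) => [|A APO]; first by rewrite divr_gt0.
have [y hy] := shB _ (avg_pseudo_orbit_interpolate hd k0 hX G_neq0 G_cont delta0 APO).
exists y.
have [_ [[x0 _] _]] := APO; have [D [D0 dD]] := d_compact_bounded hd x0 hX.
under eq_fun do under eq_bigr do
  rewrite mm_img_iter_mul -[in X in hausdorff _ _ X](interpolate_mul G A k0).
have -> : eps = k%:R * (eps / k%:R) by rewrite mulrC divfK ?gt_eqF.
pose a i := hausdorff d (mm_img (mm_iter G i) [set y]) (interpolate G k A i).
apply: (@limn_esup_mean_mul_lt R a k _ k0 _ hy) => i.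
by have /andP[] := hausdorff_ge0_le hd (mm_img (mm_iter G i) [set y])
  (interpolate G k A i) D0 dD.
Qed.

Theorem theorem4p2 (R : realType) (X : Type) (d : X -> X -> R)
  (hd : is_metric d) (hX : d_compact d setT)
  (f1 f2 : X -> X) (hf1 : d_continuous d f1) (hf2 : d_continuous d f2) :
  avg_shadowing d [:: f1; f2] ->
  forall k : nat, (1 < k)%N -> avg_shadowing d (mm_iter [:: f1; f2] k).
Proof.
move=> shF k /ltnW k0; apply: avg_shadowing_mm_iter => //.
by move=> g [<-|[<-|[]]].
Qed.
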